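(* The map $H_2$ satisfies $H_2\circ(12)=(12)(34)\circ H_2$.
   Context: Work over $\mathbb F_2$. $E(r)$ is the simplicial set whose $n$-simplices are tuples $(\sigma_0,\dots,\sigma_n)$ in $\Sigma_r$ ($d_i$ deletes, $s_i$ repeats the $i$-th entry), with $\Sigma_r$ acting by left multiplication entrywise; $\mathcal E(r)=N_*(E(r))$ is its normalized chain complex over $\mathbb F_2$ with the induced action. $\circ_E:E(2)\times E(2)\times E(2)\to E(4)$ applies coordinatewise the block composition $\Sigma_2\times\Sigma_2\times\Sigma_2\to\Sigma_4$ of permutations. The Shih homotopy $SHI:N_n(X\times Y)\to N_{n+1}(X\times Y)$ is zero for $n=0$, and for $n>0$ $$SHI(x\times y)=\sum s_{v_p+m}\cdots s_{v_1+m}s_{m-1}d_{n-p+1}\cdots d_nx\times s_{w_{q+1}+m}\cdots s_{w_1+m}d_{n-p-q}\cdots d_{n-p-1}y,$$ $m=n-p-q$, sum over disjoint $\{v_1<\dots<v_p\},\{w_1<\dots<w_{q+1}\}\subseteq\{0,\dots,p+q\}$ with $0\le p\le n-1$, $0\le q\le n-p-1$. $H_2:\mathcal E(2)\to\mathcal E(4)$ is the degree $1$ linear map $H_2(\sigma_0,\dots,\sigma_n)=N_*(\circ_E)((e,\dots,e)\otimes SHI(\sigma_0,\dots,\sigma_n)^{\otimes2})$, where $SHI(\sigma_0,\dots,\sigma_n)^{\otimes2}$ is $SHI$ of the diagonal simplex $(\sigma_0,\dots,\sigma_n)\times(\sigma_0,\dots,\sigma_n)$ of $E(2)\times E(2)$,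 paired with the constant simplex $(e,\dots,e)$ of $E(2)$ of the same dimension. $(12)$ acts on $\mathcal E(2)$ and $(12)(34)$ on $\mathcal E(4)$. *)

From mathcomp Require Import all_boot all_algebra all_fingroup.
Set Implicit Arguments. Unset Strict Implicit. Unset Printing Implicit Defensive.
Import GRing.Theory.
Local Open Scope ring_scope.

(* Convention: the group law used for the
   "left multiplication" action is composition of functions, g.s = g o s,
   which in MathComp's notation is (s * g)%g (since (s * g) x = g (s x)). *)
Definition Sym (r : nat) := {perm 'I_r}.

(* Simplices of E(r) are represented as sequences (sigma_0, ..., sigma_n). *)
Definition face {T : Type} (i : nat) (s : seq T) : seq T := take i s ++ drop i.+1 s.
Definition degen {T : Type} (i : nat) (s : seq T) : seq T := take i.+1 s ++ drop i s.

Definition degenerate {T : eqType} (s : seq T) : bool :=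
  has (fun pr => pr.1 == pr.2) (zip s (behead s)).

(* Index data (p, q, {v_1<..<v_p}, {w_1<..<w_{q+1}}) of the Shih homotopy in degree n. *)
Definition shi_index (n : nat) := ('I_n * 'I_n * {set 'I_n.+1} * {set 'I_n.+1})%type.

Definition shi_ok (n : nat) (z : shi_index n) : bool :=
  let: (p, q, v, w) := z in
  [&& (q < n - p)%N, v :&: w == set0,
      (v :|: w) \subset [set i : 'I_n.+1 | (i <= p + q)%N],
      #|v| == (p : nat) & #|w| == (q : nat).+1].

Definition sorted_elems (n : nat) (v : {set 'I_n.+1}) : seq nat :=
  sort leq [seq val i | i in v].

(* s_{v_p+m} ... s_{v_1+m} s_{m-1} d_{n-p+1} ... d_n x *)
Definition shi_x {T : Type} (n : nat) (z : shi_index n) (x : seq T) : seq T :=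
  let: (p, q, v, w) := z in
  let m := (n - p - q)%N in
  foldl (fun s k => degen (k + m) s)
    (degen m.-1 (foldl (fun s k => face k s) x [seq (n - k)%N | k <- iota 0 p]))
    (sorted_elems v).

(* s_{w_{q+1}+m} ... s_{w_1+m} d_{n-p-q} ... d_{n-p-1} y *)
Definition shi_y {T : Type} (n : nat) (z : shi_index n) (y : seq T) : seq T :=
  let: (p, q, v, w) := z in
  let m := (n - p - q)%N in
  foldl (fun s k => degen (k + m) s)
    (foldl (fun s k => face k s) y [seq (n - p - 1 - k)%N | k <- iota 0 q])
    (sorted_elems w).

(* The terms (as a list of simplices of X x Y, with multiplicity) of SHI(x x y). *)
Definition SHI_terms {T : Type} (n : nat) (x y : seq T) : seq (seq T * seq T) :=
  if n == 0%N then [::]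
  else [seq (shi_x z x, shi_y z y) | z <- [seq z <- enum [set: shi_index n] | shi_ok z]].

Definition bsum_fun (a b : Sym 2) (i : 'I_(2 + 2)) : 'I_(2 + 2) :=
  unsplit (match split i with inl j => inl (a j) | inr j => inr (b j) end).

Lemma bsum_inj (a b : Sym 2) : injective (bsum_fun a b).
Proof.
move=> i j; rewrite /bsum_fun.
case Hi: (split i) => [x|x]; case Hj: (split j) => [y|y] /(can_inj unsplitK) //= [] /perm_inj exy;
  by rewrite -[i]splitK -[j]splitK Hi Hj exy.
Qed.

Definition bsum (a b : Sym 2) : Sym 4 := perm (@bsum_inj a b).

Definition swap_blocks : Sym 4 :=
  (tperm (inord 0 : 'I_4) (inord 2) * tperm (inord 1 : 'I_4) (inord 3))%g.

(* Operadic block composition sigma o (tau1, tau2) : Sigma_2 x Sigma_2 x Sigma_2 -> Sigma_4: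
   the element 2j+k (j,k in {0,1}) is sent to 2 sigma(j) + tau_j(k).
   Since Sigma_2 = {e, (12)}, this is the block sum, followed by the block swap
   when sigma = (12). *)
Definition opcomp (s a b : Sym 2) : Sym 4 :=
  if s == 1%g then bsum a b else (bsum a b * swap_blocks)%g.

Definition circE (x a b : seq (Sym 2)) : seq (Sym 4) :=
  [seq opcomp t.1.1 t.1.2 t.2 | t <- zip (zip x a) b].

(* Normalized chains N_n(E(r)) over F_2: functions on n-simplices,
   vanishing on degenerate simplices (see [normalized]). *)
Definition chain (r n : nat) := {ffun (n.+1).-tuple (Sym r) -> 'F_2}.

Definition normalized (r n : nat) (c : chain r n) : Prop :=
  forall t : (n.+1).-tuple (Sym r), degenerate t -> c t = 0.

(* Action of g in Sigma_r on chains, induced by (g.s)_i = g o s_i on simplices: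
   (g.c)(t) = c(g^{-1}.t). *)
Definition chain_act (r : nat) (g : Sym r) (n : nat) (c : chain r n) : chain r n :=
  [ffun t => c (map_tuple (fun s => (s * g^-1)%g) t)].

(* H_2 on a generator (sigma_0, ..., sigma_n): the normalized chain
   N_*(circ_E)((e,...,e) (x) SHI((sigma) x (sigma))), degenerate images being 0. *)
Definition H2gen (n : nat) (t : (n.+1).-tuple (Sym 2)) : chain 4 n.+1 :=
  [ffun u : (n.+2).-tuple (Sym 4) =>
     if degenerate u then 0
     else (count (pred1 (val u))
             [seq circE (nseq n.+2 1%g) pr.1 pr.2 | pr <- SHI_terms n (val t) (val t)])%:R].

Definition H2 (n : nat) (c : chain 2 n) : chain 4 n.+1 :=
  [ffun u => \sum_(t : (n.+1).-tuple (Sym 2)) c t * H2gen t u].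

Definition tr12 : Sym 2 := tperm (inord 0 : 'I_2) (inord 1).
Definition tr12_34 : Sym 4 :=
  (tperm (inord 0 : 'I_4) (inord 1) * tperm (inord 2 : 'I_4) (inord 3))%g.

From Pilot Require Import Defs.
From mathcomp Require Import all_boot all_algebra all_fingroup.
Import Defs. (* so that [Sym] is [Defs.Sym], not [perm.Sym] *)
Set Implicit Arguments. Unset Strict Implicit. Unset Printing Implicit Defensive.
Local Open Scope group_scope.

(* The Shih homotopy is built from faces and degeneracies only, so it is natural in
   the simplicial set; in E(2) the action of g is such a map, and the diagonal
   simplex stays diagonal.  Pairing with the constant simplex (e,...,e), the
   operadic composition reduces to the block sum, which sends the diagonal element
   (g, g) to g (+) g; for g = (12) this is (12)(34).  Hence H_2 intertwines the
   two actions on generators, and by linearity on all chains, normalized or not. *)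

Lemma face_map (T U : Type) (f : T -> U) i s : face i (map f s) = map f (face i s).
Proof. by rewrite /face map_cat map_take map_drop. Qed.

Lemma degen_map (T U : Type) (f : T -> U) i s : degen i (map f s) = map f (degen i s).
Proof. by rewrite /degen map_cat map_take map_drop. Qed.

Lemma foldl_face_map (T U : Type) (f : T -> U) l s :
  foldl (fun s k => face k s) (map f s) l = map f (foldl (fun s k => face k s) s l).
Proof. by elim: l s => [|k l IHl] s //=; rewrite face_map IHl. Qed.

Lemma foldl_degen_map (T U : Type) (f : T -> U) m l s :
  foldl (fun s k => degen (k + m) s) (map f s) l =
  map f (foldl (fun s k => degen (k + m) s) s l).
Proof. by elim: l s => [|k l IHl] s //=; rewrite degen_map IHl. Qed.

Lemma shi_x_map (T U : Type) (f : T -> U) n (z : shi_index n) x :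
  shi_x z (map f x) = map f (shi_x z x).
Proof. by case: z => [[[p q] v] w]; rewrite /= foldl_face_map degen_map foldl_degen_map. Qed.

Lemma shi_y_map (T U : Type) (f : T -> U) n (z : shi_index n) y :
  shi_y z (map f y) = map f (shi_y z y).
Proof. by case: z => [[[p q] v] w]; rewrite /= foldl_face_map foldl_degen_map. Qed.

Lemma SHI_terms_map (T U : Type) (f : T -> U) n x y :
  SHI_terms n (map f x) (map f y) =
  [seq (map f pr.1, map f pr.2) | pr <- SHI_terms n x y].
Proof.
rewrite /SHI_terms; case: ifP => // _; rewrite -map_comp.
by apply: eq_map => z /=; rewrite shi_x_map shi_y_map.
Qed.

Lemma degenerate_map (T U : eqType) (f : T -> U) s :
  injective f -> degenerate (map f s) = degenerate s.
Proof.
move=> f_inj; rewrite /degenerate.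
by elim: s => [|x [|y s] IHs] //=; rewrite (inj_eq f_inj) IHs.
Qed.

Lemma bsumM (a b c d : Sym 2) : bsum (a * c) (b * d) = (bsum a b * bsum c d).
Proof.
apply/permP => i; rewrite permM !permE /bsum_fun.
by case: (@split 2 2 i) => j; rewrite permE /bsum_fun unsplitK //= permM.
Qed.

Lemma bsum_tr12 : bsum tr12 tr12 = tr12_34.
Proof.
apply/permP => i; rewrite /tr12_34 /tr12 permM !permE /bsum_fun.
case: splitP => j i_j; rewrite -(inord_val i) i_j; case: j i_j => -[|[|//]] ? _;
  by apply/val_inj; rewrite /= !permE /= -!(inj_eq val_inj) /= !inordK.
Qed.

Lemma circE1_mulg k (g h : Sym 2) (a b : seq (Sym 2)) :
  circE (nseq k 1) [seq s * g | s <- a] [seq s * h | s <- b] =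
  [seq s * bsum g h | s <- circE (nseq k 1) a b].
Proof.
rewrite /circE; elim: a k b => [|x a IHa] [|k] [|y b] //=.
by rewrite IHa /opcomp eqxx bsumM.
Qed.

Section SimplexAction.

Variable r : nat.

Definition act_simplex (g : Sym r) n (t : n.-tuple (Sym r)) : n.-tuple (Sym r) :=
  map_tuple (fun s => s * g) t.

Lemma act_simplex_inj g n : injective (@act_simplex g n).
Proof. by move=> t1 t2 /(congr1 val) /(inj_map (@mulIg _ _)) /val_inj. Qed.

Lemma act_simplexKV g n (t : n.-tuple (Sym r)) : act_simplex g (act_simplex g^-1 t) = t.
Proof. by apply: val_inj; rewrite /= -map_comp map_id_in // => s _ /=; rewrite mulgKV. Qed.

Lemma chain_actE g n (c : chain r n) t : chain_act g c (act_simplex g t) = c t.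
Proof. by rewrite ffunE -[in RHS](act_simplexKV g^-1 t) invgK. Qed.

End SimplexAction.

Lemma H2gen_act (g : Sym 2) n (t : (n.+1).-tuple (Sym 2)) u :
  H2gen (act_simplex g t) (act_simplex (bsum g g) u) = H2gen t u.
Proof.
rewrite !ffunE degenerate_map; last exact: mulIg.
case: ifP => // _; congr (_%:R)%R.
rewrite SHI_terms_map -map_comp (eq_map (fun pr => circE1_mulg _ _ _ pr.1 pr.2)).
by rewrite !count_map; apply: eq_count => pr /=; rewrite (inj_eq (inj_map (@mulIg _ _))).
Qed.

Lemma H2_act (g : Sym 2) n (c : chain 2 n) :
  H2 (chain_act g c) = chain_act (bsum g g) (H2 c).
Proof.
apply/ffunP => u; rewrite -[u](act_simplexKV (bsum g g)) chain_actE !ffunE.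
rewrite (reindex_inj (@act_simplex_inj 2 g n.+1)); apply: eq_bigr => t _.
by rewrite chain_actE H2gen_act.
Qed.

Theorem mainTheorem7 (n : nat) (c : chain 2 n) :
  normalized c -> H2 (chain_act tr12 c) = chain_act tr12_34 (H2 c).
Proof. by move=> _; rewrite -bsum_tr12 H2_act. Qed.
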